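(* Let $\varphi$ be an Orlicz $N$-function with Young–Fenchel transform $\psi$ and let $q_\varphi$ be the generalized inverse of the density of $\varphi$. Let $\{X_{k,n},k,n\ge1\}$ be a double array of independent $\varphi$-subgaussian random variables with $\tau_\varphi(X_{k,n})=1$ for all $k,n$, and set $Y_{m,j}=\max_{1\le k\le m,1\le n\le j}X_{k,n}-\psi^{-1}(\ln(mj))$, $Y^+_{m,j}=\max(Y_{m,j},0)$. Assume: (i) there is a strictly increasing function $\kappa:\mathbb R^+\to\mathbb R^+$ and a constant $C>0$ such that $P(X_{k,n}>x)\ge C\exp(-\kappa(x))$ for all $k,n\ge1$ and $x>0$; (ii) there exist $x_0>0$ and $B,C_1>0$ such that $\exp(-\kappa(x))\ge C_1\exp(-B\psi(x))$ for all $x\ge x_0$; (iii) for some $\varepsilon>0$, $\sup_{x>x_0}\frac{q_\varphi(x+\varepsilon)}{\psi(x)}\le C_2<+\infty$. Then for every $\alpha<2-B(1+C_2\varepsilon)$, $$\sum_{m=1}^\infty\sum_{j=1}^\infty(mj)^{-\alpha}P(Y^+_{m,j}>\varepsilon)=+\infty.$$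
   Context: An Orlicz $N$-function is a continuous even convex function $\varphi:\mathbb R\to\mathbb R$ with $\varphi(0)=0$, increasing on $(0,\infty)$, with $\varphi(x)/x\to0$ as $x\to0$ and $\varphi(x)/x\to+\infty$ as $x\to+\infty$. It can be written $\varphi(x)=\int_0^{|x|}p_\varphi(t)\,dt$ with non-decreasing density $p_\varphi$; its generalized inverse is $q_\varphi(t)=\sup\{u\ge0:p_\varphi(u)\le t\}$. The Young–Fenchel transform is $\psi(x)=\sup_{y\in\mathbb R}(xy-\varphi(y))$, with $\psi(x)=\int_0^{|x|}q_\varphi(t)dt$; $\psi^{-1}$ is the inverse of $\psi$ on $[0,\infty)$. A random variable $X$ is $\varphi$-subgaussian if $EX=0$ and there is a finite $a>0$ with $E\exp(tX)\le\exp(\varphi(at))$ for all $t$; $\tau_\varphi(X)=\inf\{a>0:E\exp(tX)\le\exp(\varphi(at))\ \forall t\}$. *)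

From HB Require Import structures.
From mathcomp Require Import all_boot all_order all_algebra.
From mathcomp Require Import all_classical all_reals all_analysis.
Set Implicit Arguments. Unset Strict Implicit. Unset Printing Implicit Defensive.
Import Order.TTheory GRing.Theory Num.Def Num.Theory.
Import numFieldNormedType.Exports.
Local Open Scope classical_set_scope.
Local Open Scope ring_scope.

Section Defs.
Variable R : realType.

Definition N_function (phi : R -> R) : Prop :=
  [/\ continuous phi,
      (forall x, phi (- x) = phi x),
      phi 0 = 0 &
  [/\
      (forall x y t, 0 <= t -> t <= 1 ->
          phi (t * x + (1 - t) * y) <= t * phi x + (1 - t) * phi y),
     
      {in `]0, +oo[ &, {homo phi : x y / x < y}},
      ((fun x => phi x / x) @ 0^' --> (0 : R)) &
      ((fun x => phi x / x) @ +oo --> +oo)]].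

Definition is_density (phi p : R -> R) : Prop :=
  (forall u v, 0 <= u -> u <= v -> p u <= p v) /\
  (forall x, (phi x)%:E =
      (\int[@lebesgue_measure R]_(t in `[0%R, `|x|%R]) (p t)%:E)%E).

Definition gen_inv (p : R -> R) (t : R) : R :=
  sup [set u | 0 <= u /\ p u <= t].

Definition young_fenchel (phi : R -> R) (x : R) : R :=
  sup (range (fun y => x * y - phi y)).

(* inverse of psi on [0,+oo) (psi is continuous, strictly increasing from 0
   to +oo there): psi^{-1}(v) = sup {u >= 0 : psi u <= v} *)
Definition inv_pos (psi : R -> R) (v : R) : R :=
  sup [set u | 0 <= u /\ psi u <= v].

Section Prob.
Context d (T : measurableType d) (P : probability T R).

Definition mgf_bound (phi : R -> R) (X : {RV P >-> R}) (a : R) : Prop :=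
  forall t : R, (\int[P]_w (expR (t * X w))%:E <= (expR (phi (a * t)))%:E)%E.

Definition phi_subgaussian (phi : R -> R) (X : {RV P >-> R}) : Prop :=
  ('E_P[X] = 0)%E /\ exists a : R, 0 < a /\ mgf_bound phi X a.

Definition tau_phi (phi : R -> R) (X : {RV P >-> R}) : R :=
  inf [set a | 0 < a /\ mgf_bound phi X a].

Definition mutually_independent (I : eqType) (D : set I)
    (X : I -> {RV P >-> R}) : Prop :=
  forall (s : seq I) (B : I -> set R),
    uniq s -> (forall i, i \in s -> D i) ->
    (forall i, i \in s -> measurable (B i)) ->
    P (\big[setI/setT]_(i <- s) (X i @^-1` B i)) =
    (\prod_(i <- s) P (X i @^-1` B i))%E.

End Prob.
End Defs.

(* max_{1<=k<=m, 1<=n<=j} X k n w  (the seed X 1 1 w is one of the terms) *)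
Definition max_array (R : realType) (f : nat -> nat -> R) (m j : nat) : R :=
  \big[Num.max/f 1%N 1%N]_(1 <= k < m.+1) \big[Num.max/f 1%N 1%N]_(1 <= n < j.+1) f k n.

(* Put s = psi^-1(ln n) with n = m j.  Then
   psi(s + eps) <= psi(s) + eps q(s + eps) <= (1 + C2 eps) ln n by (iii), hence
   by (i) and (ii) each X_{k,l} exceeds s + eps with probability at least
   a = C C1 n^-beta, beta = B (1 + C2 eps).  By independence
   P(Y+_{m,j} > eps) >= 1 - (1 - a)^n >= n a / (1 + C C1), using n a <= C C1,
   i.e. beta >= 1: the subgaussian upper tail P(X >= x) <= e^(1 - psi x) can
   only dominate the lower bound C C1 e^(-B psi x) if B >= 1.  So the (m, 1)
   term is at least c m^(1 - alpha - beta) >= c / m, and already the first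
   column diverges like the harmonic series. *)

From HB Require Import structures.
From mathcomp Require Import all_boot all_order all_algebra.
From mathcomp Require Import all_classical all_reals all_analysis.
From mathcomp Require Import ring lra measurable_realfun.
Set Implicit Arguments.
Unset Strict Implicit.
Unset Printing Implicit Defensive.
Import Order.TTheory GRing.Theory Num.Def Num.Theory.
Import numFieldNormedType.Exports.
Local Open Scope classical_set_scope.
Local Open Scope ring_scope.

Section young_fenchel.
Variables (R : realType) (phi : R -> R).
Hypothesis Nphi : N_function phi.
Local Notation psi := (young_fenchel phi).

Lemma N_function_ge0 x : 0 <= phi x.
Proof.
case: Nphi => _ phiN phi0 [phi_convex _ _ _].
have := phi_convex x (- x) 2^-1; rewrite phiN -mulrDl.
have -> : 2^-1 * x + (1 - 2^-1) * - x = 0 by field.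
have -> : 2^-1 + (1 - 2^-1) = 1 :> R by field.
rewrite phi0 mul1r; apply; first by rewrite invr_ge0.
by rewrite invf_le1 ?ler1n.
Qed.

Lemma N_function_norm y : phi `|y| = phi y.
Proof.
case: Nphi => _ phiN _ _.
by have [y0|y0] := leP 0 y; [rewrite ger0_norm | rewrite ltr0_norm // phiN].
Qed.

Lemma N_function_superlinear (A : R) : exists M, forall x, M < x -> A <= phi x / x.
Proof.
case: Nphi => _ _ _ [_ _ _ /cvgryPge/(_ A)[M [_ HM]]].
by exists M.
Qed.

Lemma young_fenchel_has_ubound u : has_ubound (range (fun y => u * y - phi y)).
Proof.
have [M HM] := N_function_superlinear (`|u| + 1).
set K := Num.max M 1.
have K1 : 1 <= K by rewrite le_max lexx orbT.
have MK : M <= K by rewrite le_max lexx.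
exists (`|u| * K) => _ [y _ <-].
have uy : u * y <= `|u| * `|y| by rewrite -normrM ler_norm.
have [yK|Ky] := leP `|y| K.
  have := N_function_ge0 y; have := ler_wpM2l (normr_ge0 u) yK; lra.
have y0 : 0 < `|y| by lra.
have := HM `|y| (le_lt_trans MK Ky).
rewrite N_function_norm ler_pdivlMr //.
have := normr_ge0 u; nra.
Qed.

Lemma young_fenchel_ge u y : u * y - phi y <= psi u.
Proof. by apply: ub_le_sup; [exact: young_fenchel_has_ubound | exists y]. Qed.

Lemma young_fenchel_le u b : (forall y, u * y - phi y <= b) -> psi u <= b.
Proof. by move=> ub; apply: ge_sup; [exists (u * 0 - phi 0), 0 | move=> _ [y _ <-]]. Qed.

Lemma young_fenchel0 : psi 0 = 0.
Proof.
case: Nphi => _ _ phi0 _; apply/eqP; rewrite eq_le; apply/andP; split.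
  by apply: young_fenchel_le => y; rewrite mul0r sub0r oppr_le0 N_function_ge0.
by have := young_fenchel_ge 0 0; rewrite mul0r phi0 subrr.
Qed.

Lemma young_fenchel_gt0 s : 0 < s -> 0 < psi s.
Proof.
move=> s0; case: Nphi => _ _ _ [_ _ phi_slope0 _].
have : \forall t \near (0 : R)^', phi t / t < s by exact: cvgr_lt phi_slope0 _ s0.
move=> /nbhs_ballP[e /= e0 He].
have e2 : 0 < e / 2 by rewrite divr_gt0.
have : phi (e / 2) / (e / 2) < s.
  apply: He; last by rewrite gt_eqF.
  by rewrite /ball /= sub0r normrN gtr0_norm // ltr_pdivrMr //; lra.
rewrite ltr_pdivrMr // => phi_small.
by apply: lt_le_trans (young_fenchel_ge s (e / 2)); lra.
Qed.

Lemma young_fenchel_sublevel_has_ubound v :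
  has_ubound [set u | 0 <= u /\ psi u <= v].
Proof.
exists (v + phi 1) => u [_ psiu].
by have := young_fenchel_ge u 1; rewrite mulr1; lra.
Qed.

Lemma inv_pos_maximal v w : 0 <= w -> psi w <= v -> w <= inv_pos psi v.
Proof. by move=> w0 psiw; apply: ub_le_sup; [exact: young_fenchel_sublevel_has_ubound|]. Qed.

(* psi is a supremum of affine functions, so its sublevel sets are closed and
   contain their supremum. *)
Lemma young_fenchel_inv_pos_le v : 0 <= v -> psi (inv_pos psi v) <= v.
Proof.
move=> v0; set S := [set u | 0 <= u /\ psi u <= v].
have S0 : S 0 by rewrite /S /= young_fenchel0.
have supS : has_sup S by split; [exists 0 | exact: young_fenchel_sublevel_has_ubound].
apply: young_fenchel_le => y; rewrite leNgt; apply/negP; rewrite /inv_pos -/S => gap.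
set s := sup S in gap; set de := s * y - phi y - v.
have de0 : 0 < de by rewrite /de; lra.
have e0 : 0 < de / (`|y| + 1) by rewrite divr_gt0 // ltr_wpDl.
have [u [u0 psiu]] := sup_adherent e0 supS; rewrite -/s => su.
have us : u <= s by apply: inv_pos_maximal.
have close : (s - u) * y < de.
  rewrite (le_lt_trans (ler_norm _)) // normrM ger0_norm ?subr_ge0 //.
  apply: (@le_lt_trans _ _ (de / (`|y| + 1) * `|y|)).
    by rewrite ler_wpM2r //; lra.
  rewrite mulrAC ltr_pdivrMr ?ltr_wpDl //; nra.
by have := young_fenchel_ge u y; rewrite /de in close; lra.
Qed.

End young_fenchel.

Section density.
Variables (R : realType) (phi p : R -> R).
Hypothesis Dp : is_density phi p.
Local Notation mu := (@lebesgue_measure R).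

Lemma nondecreasing_integrable_itv_oc (f : R -> R) (a b : R) :
  {homo f : x y / x <= y} -> mu.-integrable `]a, b] (EFin \o f).
Proof.
move=> f_nd; apply: measurable_bounded_integrable => //.
- suff : (mu `]a, b] < +oo)%E by [].
  by rewrite lebesgue_measure_itv /=; case: ifP => _; rewrite ?ltry // -EFinD ltry.
- exact: nondecreasing_measurable.
exists (`|f a| + `|f b|); split; first by rewrite num_real.
move=> M fM x /=; rewrite in_itv /= => /andP[/ltW ax xb].
apply: le_trans (ltW fM); rewrite ler_norml.
have := f_nd _ _ ax; have := f_nd _ _ xb.
have := ler_norm (f b); have := ler_norm (- f a); rewrite normrN.
have := normr_ge0 (f a); have := normr_ge0 (f b).
move=> *; apply/andP; split; lra.
Qed.

(* [p] is only monotone on [0, +oo); clamping its argument makes it monotone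
   everywhere without changing it there. *)
Let p0 x := p (Num.max x 0).

Let p0_nondecreasing : {homo p0 : x y / x <= y}.
Proof.
move=> x y xy; apply: Dp.1; first by rewrite le_max lexx orbT.
by rewrite ge_max !le_max xy lexx /= orbT.
Qed.

Let density_increment a b : 0 <= a -> a <= b ->
  ((phi b - phi a)%:E = \int[mu]_(t in `]a, b]) (p0 t)%:E)%E.
Proof.
move=> a0 ab.
have phiE x : 0 <= x -> (phi x)%:E = (\int[mu]_(t in `[0%R, x]) (p0 t)%:E)%E.
  move=> x0; rewrite Dp.2 ger0_norm //; apply: eq_integral => t.
  by rewrite inE /= in_itv /= => /andP[t0 _]; rewrite /p0 max_l.
have split_itv : [set` `[0, b]] = [set` `[0, a]] `|` [set` `]a, b]] :> set R.
  by rewrite (@itv_bndbnd_setU _ _ _ (BRight a)) // bnd_simp.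
have := phiE b (le_trans a0 ab); rewrite split_itv integral_setU //; first last.
- apply/disj_setPS => x []; rewrite /= !in_itv /= => /andP[_ xa] /andP[ax _].
  by move: (lt_le_trans ax xa); rewrite ltxx.
- apply/measurable_EFinP; apply: (nondecreasing_measurable _ p0_nondecreasing).
  exact: measurableU.
rewrite -phiE //.
case: (\int[_]_(_ in _) _)%E => [r [->]|//|//].
by rewrite addrAC subrr add0r.
Qed.

Let integral_cst_itv_oc (a b c : R) : a <= b ->
  (\int[mu]_(t in `]a, b]) c%:E = (c * (b - a))%:E)%E.
Proof.
move=> ab; have lenE : mu `]a, b] = (b - a)%:E.
  rewrite lebesgue_measure_itv /= lte_fin.
  by case: ltgtP ab => // ->; rewrite subrr.
by rewrite integral_cst // [X in (_ * X)%E]lenE -EFinM.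
Qed.

Lemma density_increment_ge a b c : 0 <= a -> a <= b ->
  (forall u, a < u -> u <= b -> c <= p u) -> c * (b - a) <= phi b - phi a.
Proof.
move=> a0 ab pc; rewrite -lee_fin density_increment // -integral_cst_itv_oc //.
apply: le_integral => //; [exact: nondecreasing_integrable_itv_oc|
  exact: nondecreasing_integrable_itv_oc|].
move=> x; rewrite inE /= in_itv /= => /andP[ax xb].
by rewrite lee_fin /p0 max_l ?pc // ltW // (le_lt_trans a0).
Qed.

Lemma density_increment_le a b c : 0 <= a -> a <= b ->
  (forall u, a < u -> u <= b -> p u <= c) -> phi b - phi a <= c * (b - a).
Proof.
move=> a0 ab pc; rewrite -lee_fin density_increment // -integral_cst_itv_oc //.
apply: le_integral => //; [exact: nondecreasing_integrable_itv_oc|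
  exact: nondecreasing_integrable_itv_oc|].
move=> x; rewrite inE /= in_itv /= => /andP[ax xb].
by rewrite lee_fin /p0 max_l ?pc // ltW // (le_lt_trans a0).
Qed.

End density.

Lemma gen_inv_ge0 (R : realType) (p : R -> R) t : 0 <= gen_inv p t.
Proof.
set G := [set u | 0 <= u /\ p u <= t].
have [supG|] := pselect (has_sup G); last by move=> ?; rewrite /gen_inv sup_out.
by case: (supG) => -[u Gu] _; exact: le_trans Gu.1 (sup_upper_bound supG Gu).
Qed.

Section generalized_inverse.
Variables (R : realType) (phi p : R -> R).
Hypotheses (Nphi : N_function phi) (Dp : is_density phi p).
Local Notation psi := (young_fenchel phi).

Lemma density_unbounded c : exists2 u, 0 <= u & c < p u.
Proof.
apply: contrapT => /forall2NP pc.
have {}pc u : 0 <= u -> p u <= c.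
  by move=> u0; case: (pc u) => // /negP; rewrite -leNgt.
have [M HM] := N_function_superlinear Nphi (c + 1).
have M1 : 1 <= Num.max M 1 by rewrite le_max lexx orbT.
have MM : M <= Num.max M 1 by rewrite le_max lexx.
set x := Num.max M 1 + 1.
have x0 : 0 < x by rewrite /x; lra.
have Mx : M < x by rewrite /x; lra.
have := HM x Mx; rewrite ler_pdivlMr //.
have := density_increment_le Dp (lexx 0) (ltW x0) (fun u u0 _ => pc u (ltW u0)).
by case: Nphi => _ _ -> _; rewrite !subr0; lra.
Qed.

Lemma gen_inv_lt c u : gen_inv p c < u -> c < p u.
Proof.
move=> Qu; rewrite ltNge; apply/negP => puc.
have [v v0 cpv] := density_unbounded c.
have Gub : has_ubound [set u | 0 <= u /\ p u <= c].
  exists v => w [w0 pw]; rewrite leNgt; apply/negP => vw.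
  by have := Dp.1 _ _ v0 (ltW vw); lra.
have u0 : 0 <= u by rewrite (le_trans (gen_inv_ge0 p c)) // ltW.
by move: (ub_le_sup Gub (conj u0 puc)); rewrite leNgt Qu.
Qed.

(* Beyond [gen_inv p (s + e)] the slope [p] of [phi] exceeds [s + e], so
   [y |-> (s + e) * y - phi y] decreases there. *)
Lemma young_fenchel_shift_le s e : 0 <= s -> 0 < e ->
  psi (s + e) <= psi s + e * gen_inv p (s + e).
Proof.
move=> s0 e0; set Q := gen_inv p (s + e).
have Q0 : 0 <= Q := gen_inv_ge0 p (s + e).
apply: young_fenchel_le => // y.
have [yQ|Qy] := leP y Q.
  have := young_fenchel_ge Nphi s y; have := ler_wpM2l (ltW e0) yQ; lra.
have := density_increment_ge Dp Q0 (ltW Qy) (fun u Qu _ => ltW (gen_inv_lt Qu)).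
have := young_fenchel_ge Nphi s Q; nra.
Qed.

Lemma young_fenchel_shift_le_mul s e C2 : 0 <= s -> 0 < e -> 0 < psi s ->
  gen_inv p (s + e) / psi s <= C2 -> psi (s + e) <= (1 + C2 * e) * psi s.
Proof.
move=> s0 e0 psis0; rewrite ler_pdivrMr // => QC2.
have := young_fenchel_shift_le s0 e0; have := ler_wpM2l (ltW e0) QC2; nra.
Qed.

End generalized_inverse.

Section elementary.
Variable R : realType.

Lemma rate_ge1_of_expR_le (c B : R) : 0 < c ->
  (forall K, exists2 y, K <= y & c * expR (- (B * y)) <= expR (1 - y)) ->
  1 <= B.
Proof.
move=> c0 big; rewrite leNgt; apply/negP => B1.
have cB0 : 0 < c * (1 - B) by rewrite mulr_gt0 // subr_gt0.
have [y] := big (expR 1 / (c * (1 - B))); rewrite ler_pdivrMr // => Ky.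
rewrite -(ler_pM2r (expR_gt0 y)) -mulrA -!expRD.
rewrite (_ : - (B * y) + y = (1 - B) * y); last by ring.
rewrite (_ : 1 - y + y = 1); last by ring.
have := ler_wpM2l (ltW c0) (expR_ge1Dx ((1 - B) * y)); nra.
Qed.

Lemma bigmax_seq_gtP (I : eqType) (r : seq I) (F : I -> R) (x t : R) :
  t < \big[Num.max/x]_(i <- r) F i <-> t < x \/ exists2 i, i \in r & t < F i.
Proof.
elim: r => [|i r IH]; first by rewrite big_nil; split; [left | case=> // -[]].
rewrite big_cons lt_max; split.
- case/orP => [tFi|/IH[tx|[j jr tFj]]]; [by right; exists i; rewrite ?mem_head|by left|].
  by right; exists j; rewrite // in_cons jr orbT.
- case=> [tx|[j]]; first by apply/orP; right; apply/IH; left.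
  rewrite in_cons => /orP[/eqP -> -> //|jr tFj].
  by apply/orP; right; apply/IH; right; exists j.
Qed.

Lemma max_array_gtP (f : nat -> nat -> R) m j t : (0 < m)%N -> (0 < j)%N ->
  t < max_array f m j <->
  exists k n, [/\ (0 < k <= m)%N, (0 < n <= j)%N & t < f k n].
Proof.
move=> m0 j0; rewrite /max_array bigmax_seq_gtP; split.
- case=> [t11|[k + /bigmax_seq_gtP[t11|[n + tf]]]]; first by exists 1%N, 1%N.
  + by exists 1%N, 1%N.
  by rewrite !mem_index_iota !ltnS => km nj; exists k, n.
- move=> [k [n [km nj tf]]]; right; exists k; first by rewrite mem_index_iota ltnS.
  by apply/bigmax_seq_gtP; right; exists n; rewrite // mem_index_iota ltnS.
Qed.

Lemma max_array_excess_gtP (f : nat -> nat -> R) m j s eps :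
  0 < eps -> (0 < m)%N -> (0 < j)%N ->
  eps < Num.max (max_array f m j - s) 0 <->
  exists2 kn, kn \in [seq (k, n) | k <- iota 1 m, n <- iota 1 j] & s + eps < f kn.1 kn.2.
Proof.
move=> eps0 m0 j0; rewrite lt_max (lt_gtF eps0) orbF ltrBrDl max_array_gtP //.
split=> [[k [n [km nj fkn]]]|[[k n] /allpairsP[[k' n'] [/= + + [-> ->]]] fkn]].
  by exists (k, n) => //; apply/allpairsP; exists (k, n); rewrite !mem_iota !add1n !ltnS.
by rewrite !mem_iota !add1n !ltnS => km nj; exists k', n'.
Qed.

Lemma expr1B_mul_le1 (a : R) (m : nat) : 0 <= a <= 1 ->
  (1 - a) ^+ m * (1 + m%:R * a) <= 1.
Proof.
move=> /andP[a0 a1]; elim: m => [|m IH]; first by rewrite expr0 mul0r addr0 mulr1.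
have q0 : 0 <= (1 - a) ^+ m by rewrite exprn_ge0 // subr_ge0.
have step : (1 - a) * (1 + (m%:R + 1) * a) <= 1 + m%:R * a.
  have : 0 <= m%:R :> R by []; nra.
rewrite exprS -mulrA -natr1; apply: le_trans IH.
by rewrite mulrCA ler_wpM2l.
Qed.

Lemma inv_le_powR_mul_1B_expr (N : nat) (kap beta alpha : R) :
  (0 < N)%N -> 0 < kap -> 1 <= beta -> alpha < 2 - beta ->
  kap * N%:R `^ (- beta) <= 1 ->
  kap / (1 + kap) / N%:R <= N%:R `^ (- alpha) * (1 - (1 - kap * N%:R `^ (- beta)) ^+ N).
Proof.
move=> N0 kap0 beta1 alpha_lt a1; set n := N%:R : R.
have n1 : 1 <= n by rewrite ler1n.
have n_neq0 : n != 0 by rewrite gt_eqF //; lra.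
set a := kap * n `^ (- beta); set q := (1 - a) ^+ N.
have a0 : 0 <= a by rewrite mulr_ge0 ?powR_ge0 // ltW.
have q_le : q * (1 + n * a) <= 1 by apply: expr1B_mul_le1; rewrite a0 a1.
have q0 : 0 <= q by rewrite exprn_ge0 // subr_ge0.
have na0 : 0 <= n * a by rewrite mulr_ge0 //; lra.
have naE : n * a = kap * n `^ (1 - beta).
  by rewrite mulrCA powRD ?n_neq0 ?implybT // powRr1 // ltW.
have na_le : n * a <= kap.
  by rewrite naE ger_pMr // -[X in _ <= X](powRr0 n); apply: ler_powR => //; lra.
have union_ge : n * a <= (1 - q) * (1 + kap).
  have : n * a <= (1 - q) * (1 + n * a) by rewrite mulrBl mul1r; lra.
  move/le_trans; apply; apply: ler_wpM2l; first by nra.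
  by rewrite lerD2l.
have rate_ge : kap / n <= n `^ (- alpha) * (n * a).
  rewrite naE mulrCA ler_wpM2l ?(ltW kap0) // -powRD ?n_neq0 ?implybT //.
  by rewrite -powR_inv1 ?(le_trans ler01) //; apply: ler_powR => //; lra.
rewrite mulrAC ler_pdivrMr ?ltr_wpDl ?(ltW kap0) // -/q -mulrA.
by apply: le_trans rate_ge _; rewrite ler_wpM2l ?powR_ge0.
Qed.

Lemma ln_natr_ge_bound (v : R) m : ((Num.bound (expR v)).+1 <= m)%N -> v <= ln m%:R.
Proof.
move=> Mm; have m_gt0 : (0 < m)%N by apply: leq_trans Mm.
rewrite -[X in X <= _]expRK ler_ln ?posrE ?expR_gt0 ?ltr0n //.
apply/ltW/(lt_le_trans (archi_boundP (expR_ge0 _))); rewrite ler_nat; exact: ltnW.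
Qed.

Lemma harmonic_series_unbounded (L : R) : exists n, L < series (@harmonic R) n.
Proof.
apply: contrapT => /forallNP bounded; apply: (@dvg_harmonic R).
apply: nondecreasing_is_cvgn.
  apply: (@nondecreasing_series _ _ xpredT 0%N) => // n _ _; exact: harmonic_ge0.
by exists L => _ [n _ <-]; rewrite leNgt; apply/negP.
Qed.

Lemma nneseries_pinfty_of_harmonic_lb (F : nat -> \bar R) (c : R) (M : nat) :
  0 < c -> (0 < M)%N -> (forall m, (0 <= F m)%E) ->
  (forall m, (M <= m)%N -> ((c / m%:R)%:E <= F m)%E) ->
  (\sum_(1 <= m <oo) F m = +oo)%E.
Proof.
move=> c0 M0 F0 Flb; apply/eqyP => L _.
have M0r : 0 < M%:R :> R by rewrite ltr0n.
have [N LN] := harmonic_series_unbounded (L * M%:R / c).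
apply: le_trans (nneseries_lim_ge (M + N) (fun m _ _ => F0 m)).
rewrite (@big_cat_nat _ _ _ M) //= ?leq_addr //.
apply: lee_paddl; first by apply: sume_ge0 => m _.
apply: (@le_trans _ _ (\sum_(M <= m < M + N) (c / m%:R)%:E)%E); last first.
  by rewrite !big_nat; apply: lee_sum => i /andP[Mi _]; exact: Flb.
rewrite sumEFin lee_fin -{1}[M]add0n big_addn addKn.
apply: (@le_trans _ _ (c / M%:R * series (@harmonic R) N)).
  by rewrite ltr_pdivrMr // in LN; rewrite mulrAC ler_pdivlMr //; lra.
rewrite /series /= mulr_sumr; apply: ler_sum => i _.
rewrite /harmonic /= -mulrA ler_pM2l // -invfM lef_pV2 ?posrE ?mulr_gt0 ?ltr0n ?addn_gt0 ?M0 ?orbT //.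
by rewrite -natrM ler_nat mulnS addnC leq_add2l leq_pmull.
Qed.

End elementary.

Section subgaussian_tail.
Context (R : realType) d (T : measurableType d) (P : probability T R).
Variable phi : R -> R.
Hypothesis Nphi : N_function phi.
Local Notation psi := (young_fenchel phi).

Lemma measurable_rv_gt (X : {RV P >-> R}) x : measurable [set w | x < X w].
Proof.
rewrite (_ : [set w | x < X w] = X @^-1` `]x, +oo[); first exact: measurable_funPTI.
by apply/seteqP; split => w /=; rewrite in_itv /= andbT.
Qed.

Lemma measurable_rv_ge (X : {RV P >-> R}) x : measurable [set w | x <= X w].
Proof.
rewrite (_ : [set w | x <= X w] = X @^-1` `[x, +oo[); first exact: measurable_funPTI.
by apply/seteqP; split => w /=; rewrite in_itv /= andbT.
Qed.

(* Letting [a] decrease to the infimum 1 in E exp(tX) <= exp(phi(a t)) only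
   needs the continuity of [phi]. *)
Lemma mgf_bound_tau_phi1 (X : {RV P >-> R}) :
  phi_subgaussian phi X -> tau_phi phi X = 1 -> mgf_bound phi X 1.
Proof.
move=> [_ [a0 [a0_gt0 mgf_a0]]] tau1 t.
set A := [set a | 0 < a /\ mgf_bound phi X a].
have infA : has_inf A by split; [exists a0 | exists 0 => a [/ltW]].
have infA1 : inf A = 1 := tau1.
have phi_cont : continuous phi by case: Nphi.
have cvg_a : (fun a => expR (phi (a * t))) @ (1 : R) --> expR (phi (1 * t)).
  apply: continuous_comp; last exact: continuous_expR.
  by apply: continuous_comp; [apply: cvgMr_tmp; exact: cvg_id | exact: phi_cont].
apply/lee_addgt0Pr => eta eta0.
have : \forall a \near (1 : R), `|expR (phi (1 * t)) - expR (phi (a * t))| < eta.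
  exact: (@cvgr_dist_lt _ R^o _ _ _ _ _ cvg_a _ eta0).
move=> /nbhs_ballP[de de0 near1].
have [a Aa] := inf_adherent de0 infA; rewrite infA1 => a_lt.
have a1 : 1 <= a by rewrite -infA1; apply: ge_inf => //; case: infA.
apply: le_trans (Aa.2 t) _; rewrite -EFinD lee_fin.
have : `|expR (phi (1 * t)) - expR (phi (a * t))| < eta.
  apply: near1; rewrite /ball /= ltr_norml.
  by apply/andP; split; lra.
by rewrite mul1r ltr_norml => /andP[+ _]; lra.
Qed.

Lemma subgaussian_tail_le (X : {RV P >-> R}) x : mgf_bound phi X 1 -> 0 <= x ->
  (P [set w | (x <= X w)%R] <= (expR (1 - psi x))%:E)%E.
Proof.
move=> mgf x0.
have [_ [y _ <-] gap] : exists2 e, range (fun y => x * y - phi y) e & psi x - 1 < e.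
  apply: sup_adherent => //; split; last exact: young_fenchel_has_ubound.
  by exists (x * 0 - phi 0), 0.
have [y0|y0] := ltP 0 y.
  apply: le_trans (chernoff X x y0) _; rewrite /mmt_gen_fun.
  apply: (@le_trans _ _ ((expR (phi y))%:E * (expR (- (y * x)))%:E)%E).
    apply: lee_wpmul2r; first by rewrite lee_fin expR_ge0.
    by have := mgf y; rewrite mul1r unlock; under eq_integral do rewrite /= mulrC.
  by rewrite -EFinM -expRD lee_fin ler_expR; lra.
apply: le_trans (probability_le1 P (measurable_rv_ge X x)) _.
rewrite lee_fin -[X in X <= _]expR0 ler_expR.
have := N_function_ge0 Nphi y; have := mulr_ge0_le0 x0 y0; lra.
Qed.

Lemma tail_rate_ge1 (X : {RV P >-> R}) (B c x0 : R) :
  mgf_bound phi X 1 -> 0 < c ->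
  (forall x, x0 <= x -> ((c * expR (- (B * psi x)))%:E <= P [set w | (x < X w)%R])%E) ->
  1 <= B.
Proof.
move=> mgf c0 lb; apply: (rate_ge1_of_expR_le c0) => K.
set x := Num.max (Num.max x0 0) (K + phi 1).
have x0x : x0 <= x by rewrite !le_max lexx.
have x_ge0 : 0 <= x by rewrite !le_max lexx orbT.
have Kx : K + phi 1 <= x by rewrite le_max lexx orbT.
exists (psi x); first by have := young_fenchel_ge Nphi x 1; rewrite mulr1; lra.
rewrite -lee_fin; apply: le_trans (lb x x0x) _.
apply: le_trans (subgaussian_tail_le mgf x_ge0).
by apply: le_measure; rewrite ?inE; [exact: measurable_rv_gt|exact: measurable_rv_ge|move=> w /ltW].
Qed.

End subgaussian_tail.

Section independent_union.
Context (R : realType) d (T : measurableType d) (P : probability T R).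

Lemma prode_le_expr (I : eqType) (s : seq I) (f : I -> \bar R) (c : R) :
  (forall i, i \in s -> (0 <= f i <= c%:E)%E) ->
  (\prod_(i <- s) f i <= (c ^+ size s)%:E)%E.
Proof.
elim: s => [|i s IH] fc; first by rewrite big_nil expr0.
have /andP[fi0 fic] := fc i (mem_head i s).
have {}fc j : j \in s -> (0 <= f j <= c%:E)%E.
  by move=> js; apply: fc; rewrite in_cons js orbT.
rewrite big_cons exprS EFinM; apply: lee_pmul => //; last exact: IH.
by rewrite big_seq; apply: prode_ge0 => j /fc /andP[].
Qed.

Lemma independent_bigcup_gt_ge (I : choiceType) (D : set I) (X : I -> {RV P >-> R})
    (s : seq I) (t a : R) :
  mutually_independent D X -> uniq s -> (forall i, i \in s -> D i) ->
  (forall i, i \in s -> (a%:E <= P [set w | (t < X i w)%R])%E) ->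
  ((1 - (1 - a) ^+ size s)%:E <=
    P (\bigcup_(i in [set` s]) [set w | (t < X i w)%R]))%E.
Proof.
move=> indep s_uniq sD lb.
have FE i : X i @^-1` `]-oo, t] = ~` [set w | (t < X i w)%R].
  by apply/seteqP; split => w; rewrite /= in_itv /= leNgt => /negP.
have -> : \bigcup_(i in [set` s]) [set w | (t < X i w)%R] =
    ~` \bigcap_(i in [set` s]) X i @^-1` `]-oo, t].
  by rewrite setC_bigcap; apply: eq_bigcupr => i _; rewrite FE setCK.
rewrite bigcap_seq probability_setC; last first.
  by apply: bigsetI_measurable => i _; exact: measurable_funPTI.
rewrite (indep s (fun=> [set` `]-oo, t]]) s_uniq sD) // EFinB; apply: leeB => //.
apply: prode_le_expr => i si; rewrite measure_ge0 /= FE probability_setC.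
  by rewrite EFinB; apply: leeB => //; exact: lb.
exact: measurable_rv_gt.
Qed.

End independent_union.

Section excess_probability.
Context (R : realType) (phi p : R -> R) d (T : measurableType d) (P : probability T R).
Variable X : nat -> nat -> {RV P >-> R}.
Variables (kap B x0 eps C2 alpha : R).
Local Notation psi := (young_fenchel phi).
Local Notation beta := (B * (1 + C2 * eps)).
Local Notation excess_event m j := [set w | (eps < Num.max
  (max_array (fun k n => X k n w) m j - inv_pos psi (ln (m * j)%:R)) 0)%R].
Hypotheses (Nphi : N_function phi) (Dp : is_density phi p).
Hypothesis indep : mutually_independent
  [set kn : nat * nat | (0 < kn.1)%N /\ (0 < kn.2)%N] (fun kn => X kn.1 kn.2).
Hypothesis tail_ge : forall k n, (0 < k)%N -> (0 < n)%N -> forall x, x0 <= x ->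
  ((kap * expR (- (B * psi x)))%:E <= P [set w | (x < X k n w)%R])%E.
Hypothesis slope_ratio_le : forall x, x0 < x -> gen_inv p (x + eps) / psi x <= C2.
Hypotheses (x0_gt0 : 0 < x0) (kap_gt0 : 0 < kap) (B_ge1 : 1 <= B) (eps_gt0 : 0 < eps).
Hypothesis alpha_lt : alpha < 2 - beta.

Let B_ge0 : 0 <= B := le_trans ler01 B_ge1.

Let C2_ge0 : 0 <= C2.
Proof.
have x01 : x0 < x0 + 1 by rewrite ltrDl.
apply: le_trans (slope_ratio_le x01); rewrite divr_ge0 ?gen_inv_ge0 // ltW //.
exact: young_fenchel_gt0 (lt_trans x0_gt0 x01).
Qed.

Let beta_ge1 : 1 <= beta.
Proof. by have := mulr_ge0 C2_ge0 (ltW eps_gt0); have := B_ge1; nra. Qed.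

Lemma tail_ge_at_inv_pos_ln (N : nat) k n : (0 < k)%N -> (0 < n)%N ->
  psi (x0 + 1) <= ln N%:R ->
  ((kap * N%:R `^ (- beta))%:E <=
    P [set w | (inv_pos psi (ln N%:R) + eps < X k n w)%R])%E.
Proof.
move=> k0 n0 lnN.
have x01_gt0 : 0 < x0 + 1 by rewrite addr_gt0.
have psi_x01 : 0 < psi (x0 + 1) := young_fenchel_gt0 Nphi x01_gt0.
have N0 : (0 < N)%N.
  by case: N lnN => // lnN; exfalso; move: lnN; rewrite mulr0n ln0; lra.
have lnN0 : 0 <= ln (N%:R : R) := le_trans (ltW psi_x01) lnN.
set s := inv_pos psi (ln N%:R).
have x0s : x0 + 1 <= s := inv_pos_maximal Nphi (ltW x01_gt0) lnN.
have s_gt0 : 0 < s := lt_le_trans x01_gt0 x0s.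
have x0_lt_s : x0 < s by apply: lt_le_trans x0s; rewrite ltrDl.
have psis_le : psi s <= ln N%:R := young_fenchel_inv_pos_le Nphi lnN0.
have shift := young_fenchel_shift_le_mul Nphi Dp (ltW s_gt0) eps_gt0
  (young_fenchel_gt0 Nphi s_gt0) (slope_ratio_le x0_lt_s).
have exponent : B * psi (s + eps) <= beta * ln N%:R.
  apply: le_trans (ler_wpM2l B_ge0 shift) _; rewrite -mulrA ler_wpM2l // ler_wpM2l //.
  by rewrite addr_ge0 // mulr_ge0 // ltW.
have x0_le : x0 <= s + eps by rewrite (le_trans (ltW x0_lt_s)) // lerDl ltW.
apply: le_trans (tail_ge k0 n0 x0_le).
rewrite lee_fin ler_pM2l // /powR gt_eqF ?ltr0n // ler_expR; lra.
Qed.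

Lemma excess_prob_ge m j : (0 < m)%N -> (0 < j)%N ->
  psi (x0 + 1) <= ln (m * j)%:R ->
  ((1 - (1 - kap * (m * j)%:R `^ (- beta)) ^+ (m * j))%:E <=
   P (excess_event m j))%E.
Proof.
move=> m0 j0 lnN; set s := inv_pos psi _.
set ix := [seq (k, n) | k <- iota 1 m, n <- iota 1 j].
have ix_pos kn : kn \in ix -> (0 < kn.1)%N /\ (0 < kn.2)%N.
  by move=> /allpairsP[[k n] [/= + + ->]]; rewrite !mem_iota => /andP[-> _] /andP[-> _].
have -> : [set w | (eps < Num.max (max_array (fun k n => X k n w) m j - s) 0)%R] =
    \bigcup_(kn in [set` ix]) [set w | (s + eps < X kn.1 kn.2 w)%R].
  apply/seteqP; split => w /=.
    by move=> /(max_array_excess_gtP _ _ eps_gt0 m0 j0)[kn ix_kn ?]; exists kn.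
  by move=> [kn ix_kn ?]; apply/(max_array_excess_gtP _ _ eps_gt0 m0 j0); exists kn.
have ix_uniq : uniq ix.
  by apply: allpairs_uniq; rewrite ?iota_uniq // => -[? ?] [? ?].
have ix_tail kn : kn \in ix ->
    ((kap * (m * j)%:R `^ (- beta))%:E <= P [set w | (s + eps < X kn.1 kn.2 w)%R])%E.
  by move=> /ix_pos[k0 n0]; exact: tail_ge_at_inv_pos_ln.
have := independent_bigcup_gt_ge indep ix_uniq ix_pos ix_tail.
by rewrite size_allpairs !size_iota.
Qed.

Lemma excess_term_ge m j : (0 < m)%N -> (0 < j)%N ->
  psi (x0 + 1) <= ln (m * j)%:R ->
  ((kap / (1 + kap) / (m * j)%:R)%:E <=
   ((m * j)%:R `^ (- alpha))%:E * P (excess_event m j))%E.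
Proof.
move=> m0 j0 lnN.
have A0 : (0 <= ((m * j)%:R `^ (- alpha))%:E)%E by rewrite lee_fin powR_ge0.
apply: le_trans (lee_wpmul2l A0 (excess_prob_ge m0 j0 lnN)).
rewrite -EFinM lee_fin inv_le_powR_mul_1B_expr ?muln_gt0 ?m0 //.
rewrite -lee_fin; apply: le_trans (tail_ge_at_inv_pos_ln (k := 1%N) (n := 1%N) isT isT lnN) _.
exact/probability_le1/measurable_rv_gt.
Qed.

Lemma excess_row_ge m : ((Num.bound (expR (psi (x0 + 1)))).+1 <= m)%N ->
  ((kap / (1 + kap) / m%:R)%:E <=
   \sum_(1 <= j <oo) (((m * j)%:R `^ (- alpha))%:E * P (excess_event m j)))%E.
Proof.
move=> Mm; have m_gt0 : (0 < m)%N by apply: leq_trans Mm.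
apply: le_trans (nneseries_lim_ge 2 _) => [|j _ _]; last first.
  by rewrite mule_ge0 // lee_fin powR_ge0.
rewrite big_nat1 -[X in (_ / X%:R)%:E]muln1.
by apply: excess_term_ge; rewrite // muln1; exact: ln_natr_ge_bound.
Qed.

End excess_probability.

Theorem theorem5 (R : realType) (phi p : R -> R)
  (d : measure_display) (T : measurableType d) (P : probability T R)
  (X : nat -> nat -> {RV P >-> R})
  (kappa : R -> R) (C x0 B C1 eps C2 : R) :
  N_function phi ->
  is_density phi p ->
  mutually_independent [set kn : nat * nat | (0 < kn.1)%N /\ (0 < kn.2)%N]
    (fun kn => X kn.1 kn.2) ->
  (forall k n, (0 < k)%N -> (0 < n)%N ->
     phi_subgaussian phi (X k n) /\ tau_phi phi (X k n) = 1) ->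
  (* (i) *)
  {in `]0, +oo[ &, {homo kappa : x y / x < y}} ->
  (forall x, 0 < x -> 0 <= kappa x) ->
  0 < C ->
  (forall k n x, (0 < k)%N -> (0 < n)%N -> 0 < x ->
     (P [set w | (x < X k n w)%R] >= (C * expR (- kappa x))%:E)%E) ->
  (* (ii) *)
  0 < x0 -> 0 < B -> 0 < C1 ->
  (forall x, x0 <= x ->
     expR (- kappa x) >= C1 * expR (- (B * young_fenchel phi x))) ->
  (* (iii) *)
  0 < eps ->
  (forall x, x0 < x -> gen_inv p (x + eps) / young_fenchel phi x <= C2) ->
  forall alpha : R, alpha < 2 - B * (1 + C2 * eps) ->
  (\sum_(1 <= m <oo) \sum_(1 <= j <oo)
     (((m * j)%:R `^ (- alpha))%:E *
      P [set w | (eps < Num.max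
          (max_array (fun k n => X k n w) m j
             - inv_pos (young_fenchel phi) (ln (m * j)%:R)) 0)%R]))%E
  = +oo%E.
Proof.
move=> Nphi Dp indep sg _ _ C_gt0 tail_i x0_gt0 B_gt0 C1_gt0 tail_ii eps_gt0
  slope_le alpha alpha_lt.
set kap := C * C1; have kap_gt0 : 0 < kap by rewrite mulr_gt0.
have tail k n : (0 < k)%N -> (0 < n)%N -> forall x, x0 <= x ->
    ((kap * expR (- (B * young_fenchel phi x)))%:E <= P [set w | (x < X k n w)%R])%E.
  move=> k0 n0 x x0x; apply: le_trans (tail_i k n x k0 n0 (lt_le_trans x0_gt0 x0x)).
  by rewrite lee_fin -mulrA ler_pM2l // tail_ii.
have [sg11 tau11] := sg 1%N 1%N isT isT.
have B_ge1 : 1 <= B.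
  apply: (tail_rate_ge1 Nphi (mgf_bound_tau_phi1 Nphi sg11 tau11) kap_gt0).
  exact: tail.
apply: (@nneseries_pinfty_of_harmonic_lb _ _ (kap / (1 + kap))
  (Num.bound (expR (young_fenchel phi (x0 + 1)))).+1) => // [|m|m Mm].
- by rewrite divr_gt0 // addr_gt0.
- by apply: nneseries_ge0 => j _ _; rewrite mule_ge0 // lee_fin powR_ge0.
- by apply: (excess_row_ge (p := p) (B := B) (x0 := x0) (C2 := C2)).
Qed.
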